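(* For every $n\ge1$, the polynomial $T_{2n}(x)+T_{2n}(y)\in\mathbb{C}[x,y]$ is a product of exactly $n$ irreducible factors (each of which is not a constant).
   Context: $T_k$ denotes the Chebycheff polynomial of degree $k$, defined by $T_k(\cos\theta)=\cos(k\theta)$. *)

From HB Require Import structures.
From mathcomp Require Import all_boot all_order all_algebra.
From mathcomp Require Import reals.
From mathcomp Require Import complex.
Set Implicit Arguments. Unset Strict Implicit. Unset Printing Implicit Defensive.
Import Order.TTheory GRing.Theory Num.Theory.
Local Open Scope ring_scope.

(* Chebyshev polynomials of the first kind, via the standard recurrence
   T_0 = 1, T_1 = X, T_(k+2) = 2 X T_(k+1) - T_k; these are exactly the
   polynomials with T_k(cos t) = cos(k t). *)
Fixpoint cheb_pair (R : nzRingType) (k : nat) : {poly R} * {poly R} :=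
  match k with
  | 0 => (1, 'X)
  | k'.+1 => let p := cheb_pair R k' in (p.2, 2%:R *: 'X * p.2 - p.1)
  end.
Definition chebT (R : nzRingType) (k : nat) : {poly R} := (cheb_pair R k).1.

(* Bivariate polynomials in x (inner variable) and y (outer variable). *)
Definition polyx (R : nzRingType) (p : {poly R}) : {poly {poly R}} := p%:P.
Definition polyy (R : nzRingType) (p : {poly R}) : {poly {poly R}} :=
  map_poly polyC p.

Definition irreducible_elt (A : idomainType) (a : A) : Prop :=
  [/\ a != 0, a \isn't a GRing.unit &
      forall b c : A, a = b * c -> b \is a GRing.unit \/ c \is a GRing.unit].

Definition is_nonconstant2 (A : nzRingType) (P : {poly {poly A}}) : Prop :=
  ~ exists c : A, P = (c%:P)%:P.

(* Writing x = (u + u^-1)/2 and y = (v + v^-1)/2 gives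
   T_2n(x) + T_2n(y) = 2 T_n(s) T_n(t), where s and t are the images of uv and
   u/v under the same map w |-> (w + w^-1)/2, and
   (s - z)(t - z) = y^2 - 2 z x y + x^2 + z^2 - 1.  Factoring T_n over its roots
   z_1, ..., z_n therefore splits T_2n(x) + T_2n(y) into n conics.  Since
   T_n(1) and T_n(-1) are nonzero, no z_i is 1 or -1, and then the conic has
   no root y = a(x) in C[x]: otherwise (a - z x)^2 = (1 - z^2)(1 - x^2), whose
   right-hand side is not a square.  A monic quadratic in y without root in
   C[x] is irreducible. *)
From HB Require Import structures.
From mathcomp Require Import all_boot all_order all_algebra.
From mathcomp Require Import reals complex.
From mathcomp Require Import ring zify.
Set Implicit Arguments. Unset Strict Implicit. Unset Printing Implicit Defensive.
Import Order.TTheory GRing.Theory Num.Theory.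
Local Open Scope ring_scope.

Section Chebyshev.
Variable F : fieldType.
Hypothesis two_neq0 : (2%:R : F) != 0.

Lemma chebTSS k : chebT F k.+2 = 2%:R *: 'X * chebT F k.+1 - chebT F k.
Proof. by []. Qed.

Definition joukowski (u : F) : F := (u + u^-1) / 2%:R.

Lemma chebT_joukowski (u : F) k : u != 0 ->
  (chebT F k).[joukowski u] = (u ^+ k + u^-1 ^+ k) / 2%:R.
Proof.
move=> u_neq0; suff /(_ k)[] : forall m,
    (chebT F m).[joukowski u] = (u ^+ m + u^-1 ^+ m) / 2%:R /\
    (chebT F m.+1).[joukowski u] = (u ^+ m.+1 + u^-1 ^+ m.+1) / 2%:R by [].
elim=> [|m [IHm IHm1]].
  by rewrite /= !hornerE /joukowski !expr0 !expr1; split; field; rewrite two_neq0.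
split=> //; rewrite chebTSS hornerD hornerN hornerM -mul_polyC hornerM hornerC hornerX.
rewrite IHm IHm1 /joukowski !exprS.
by field; rewrite two_neq0.
Qed.

Lemma size_chebT k : size (chebT F k) = k.+1.
Proof.
suff /(_ k)[] : forall m, [/\ size (chebT F m) = m.+1,
    size (chebT F m.+1) = m.+2 & lead_coef (chebT F m.+1) = 2%:R ^+ m] by [].
elim=> [|m [IHm IHm1 lead_m1]].
  by rewrite /= size_polyX size_poly1 lead_coefX.
have size_top : size (2%:R *: 'X * chebT F m.+1) = m.+3.
  by rewrite -scalerAl size_scale // mulrC size_mulX -?size_poly_eq0 IHm1.
have size_lt : (size (- chebT F m) < size (2%:R *: 'X * chebT F m.+1)%R)%N.
  by rewrite size_polyN size_top IHm.
rewrite chebTSS size_polyDl // lead_coefDl // size_top -scalerAl lead_coefZ.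
by rewrite lead_coefM lead_coefX mul1r lead_m1 exprS.
Qed.

Lemma chebT_neq0 k : chebT F k != 0.
Proof. by rewrite -size_poly_eq0 size_chebT. Qed.

Lemma chebT_root_sqr_neq1 k z : root (chebT F k) z -> z ^+ 2 != 1.
Proof.
apply: contraTN; rewrite sqrf_eq1 => z_pm1.
have z_neq0 : z != 0 by case/orP: z_pm1 => /eqP->; rewrite ?oppr_eq0 oner_eq0.
have zV : z^-1 = z by case/orP: z_pm1 => /eqP->; rewrite ?invrN invr1.
have -> : z = joukowski z by rewrite /joukowski zV; field.
rewrite /root chebT_joukowski // zV.
have -> : (z ^+ k + z ^+ k) / 2%:R = z ^+ k by field; rewrite two_neq0.
by rewrite expf_neq0.
Qed.

Lemma chebT_double_add_joukowski (u v : F) n : u != 0 -> v != 0 ->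
  (chebT F (2 * n)).[joukowski u] + (chebT F (2 * n)).[joukowski v] =
  2%:R * (chebT F n).[joukowski (u * v)] * (chebT F n).[joukowski (u / v)].
Proof.
move=> u_neq0 v_neq0.
rewrite !chebT_joukowski ?mulf_neq0 ?invr_eq0 // !invfM invrK mulnC !exprM.
rewrite !exprMn !exprVn.
have un_neq0 : u ^+ n != 0 by rewrite expf_neq0.
have vn_neq0 : v ^+ n != 0 by rewrite expf_neq0.
move: (u ^+ n) (v ^+ n) un_neq0 vn_neq0 => a b a_neq0 b_neq0.
by field; rewrite two_neq0 a_neq0 b_neq0.
Qed.

End Chebyshev.

Lemma joukowski_surj (F : closedFieldType) (x : F) : (2%:R : F) != 0 ->
  exists2 u, u != 0 & x = joukowski u.
Proof.
move=> two_neq0.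
have : size (('X - (2%:R * x)%:P) * 'X + 1%:P : {poly F}) != 1.
  by rewrite size_MXaddC size_XsubC oner_eq0 andbF.
case/closed_rootP=> u; rewrite /root !hornerE => /eqP u_root.
have u_neq0 : u != 0.
  by apply: contra_eq_neq u_root => ->; rewrite mulr0 add0r oner_eq0.
exists u => //; apply/eqP; rewrite eq_sym -subr_eq0.
have -> : joukowski u - x = ((u - 2%:R * x) * u + 1) / (2%:R * u).
  by rewrite /joukowski; field; rewrite two_neq0 u_neq0.
by rewrite u_root mul0r.
Qed.

Section ChebyshevConic.
Variable F : fieldType.
Hypothesis two_neq0 : (2%:R : F) != 0.

(* y^2 - 2 r x y + x^2 + r^2 - 1 as a quadratic in the outer variable y. *)
Definition chebyshev_conic (r : F) : {poly {poly F}} :=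
  ('X - ((2%:R * r)%:P * 'X)%:P) * 'X + ('X ^+ 2 + (r ^+ 2 - 1)%:P)%:P.

Lemma horner2_chebyshev_conic r x y :
  ((chebyshev_conic r).[y%:P]).[x] = y ^+ 2 - 2%:R * r * x * y + x ^+ 2 + r ^+ 2 - 1.
Proof. by rewrite /chebyshev_conic !hornerE /=; ring. Qed.

Lemma chebyshev_conic_joukowski z (u v : F) : u != 0 -> v != 0 ->
  ((chebyshev_conic z).[(joukowski v)%:P]).[joukowski u] =
  (joukowski (u * v) - z) * (joukowski (u / v) - z).
Proof.
move=> u_neq0 v_neq0; rewrite horner2_chebyshev_conic /joukowski !invfM invrK.
by field; rewrite two_neq0 u_neq0 v_neq0.
Qed.

Lemma size_chebyshev_conic r : size (chebyshev_conic r) = 3.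
Proof. by rewrite size_MXaddC -size_poly_eq0 size_XsubC. Qed.

Lemma chebyshev_conic_monic r : lead_coef (chebyshev_conic r) = 1.
Proof.
rewrite lead_coefDl ?lead_coefMX ?lead_coefXsubC // size_polyC size_mulX.
  by rewrite size_XsubC; case: eqP.
by rewrite -size_poly_eq0 size_XsubC.
Qed.

Lemma sqr_neq_scaled_1subX2 (d : F) (b : {poly F}) :
  d != 0 -> b ^+ 2 != d%:P * (1 - 'X ^+ 2).
Proof.
move=> d_neq0; apply/eqP => b2E.
have b1_eq0 : b.[1] = 0.
  have : b.[1] ^+ 2 = 0 by rewrite -horner_exp b2E !hornerE expr1n subrr mulr0.
  by move/eqP; rewrite expf_eq0 => /andP[_ /eqP].
(* differentiate at 1: the left side gives 2 b(1) b'(1) = 0, the right -2d *)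
have := congr1 (fun p => (deriv p).[1]) b2E; rewrite /= expr2 !derivM.
rewrite derivC mul0r add0r derivB derivC derivXn sub0r !hornerE b1_eq0.
rewrite mul0r mulr0 addr0 => /esym/eqP.
by rewrite mulf_eq0 (negPf d_neq0) oppr_eq0 (negPf two_neq0).
Qed.

Lemma chebyshev_conic_no_root r (a : {poly F}) :
  r ^+ 2 != 1 -> ~~ root (chebyshev_conic r) a.
Proof.
move=> r2_neq1; apply: contra (@sqr_neq_scaled_1subX2 (1 - r ^+ 2) (a - r%:P * 'X) _).
  move=> /rootP conic_a; apply/eqP; rewrite -[LHS]subr0 -conic_a.
  rewrite /chebyshev_conic !hornerE /= rmorphB rmorphXn /=; ring.
by rewrite subr_eq0 eq_sym.
Qed.

End ChebyshevConic.

(* Only a factor of size 2 could be a proper factor, and it would give a root. *)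
Lemma irreducible_size3 (A : idomainType) (P : {poly A}) :
  size P = 3 -> lead_coef P \is a GRing.unit -> (forall a, ~~ root P a) ->
  irreducible_elt P.
Proof.
move=> sizeP lcP_unit P_no_root.
have P_neq0 : P != 0 by rewrite -size_poly_eq0 sizeP.
split=> //; first by rewrite poly_unitE sizeP.
move=> b c P_bc.
have b_neq0 : b != 0 by apply: contraNneq P_neq0 => b0; rewrite P_bc b0 mul0r.
have c_neq0 : c != 0 by apply: contraNneq P_neq0 => c0; rewrite P_bc c0 mulr0.
have size_bc : (size b + size c).-1 = 3 by rewrite -size_mul // -P_bc.
have /andP[lcb_unit lcc_unit] :
    (lead_coef b \is a GRing.unit) && (lead_coef c \is a GRing.unit).
  by rewrite -unitrM -lead_coefM -P_bc.
have const_unit (q : {poly A}) : size q = 1 -> lead_coef q \is a GRing.unit ->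
    q \is a GRing.unit.
  by move=> size_q; rewrite poly_unitE size_q lead_coefE size_q.
have [size_b1|size_b_neq1] := eqVneq (size b) 1; first by left; apply: const_unit.
have [size_c1|size_c_neq1] := eqVneq (size c) 1; first by right; apply: const_unit.
have size_b2 : size b = 2.
  move: size_bc size_b_neq1 size_c_neq1; rewrite -!size_poly_eq0 in b_neq0 c_neq0.
  by move: b_neq0 c_neq0; lia.
have b1_unit : b`_1 \is a GRing.unit by rewrite lead_coefE size_b2 in lcb_unit.
have /negP[] := P_no_root (- b`_0 / b`_1).
rewrite P_bc rootM; apply/orP; left; apply/rootP.
rewrite horner_coef size_b2 !big_ord_recr big_ord0 /= add0r expr0 mulr1 expr1.
by rewrite mulrC mulrVK // subrr.
Qed.

Lemma irreducible_scaled_chebyshev_conic (F : fieldType) (c r : F) :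
  (2%:R : F) != 0 -> c != 0 -> r ^+ 2 != 1 ->
  irreducible_elt ((c%:P)%:P * chebyshev_conic r) /\
  is_nonconstant2 ((c%:P)%:P * chebyshev_conic r).
Proof.
move=> two_neq0 c_neq0 r2_neq1.
have size3 : size ((c%:P)%:P * chebyshev_conic r) = 3.
  by rewrite size_Cmul ?polyC_eq0 // size_chebyshev_conic.
split; last by case=> c' E; move: size3; rewrite E size_polyC; case: eqP.
apply: irreducible_size3 => //.
  rewrite lead_coefM lead_coefC chebyshev_conic_monic mulr1.
  by rewrite poly_unitE size_polyC c_neq0 coefC unitfE.
move=> a; rewrite rootM negb_or chebyshev_conic_no_root // andbT.
by rewrite rootC polyC_eq0.
Qed.

Lemma poly_eq0_of_inj_roots (A : idomainType) (g : nat -> A) (p : {poly A}) :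
  injective g -> (forall i, root p (g i)) -> p = 0.
Proof.
move=> g_inj p_roots; apply: (roots_geq_poly_eq0 (rs := map g (iota 0 (size p)))).
- by apply/allP => _ /mapP[i _ ->].
- by rewrite map_inj_uniq ?iota_uniq.
- by rewrite size_map size_iota.
Qed.

Lemma bivariate_poly_eq0 (A : numDomainType) (P : {poly {poly A}}) :
  (forall x y : A, (P.[y%:P]).[x] = 0) -> P = 0.
Proof.
move=> P_eq0.
have natr_inj : injective (fun i : nat => i%:R : A).
  by move=> i j /eqP; rewrite eqr_nat => /eqP.
apply: (@poly_eq0_of_inj_roots _ (fun i : nat => (i%:R : A)%:P)).
  by move=> i j /polyC_inj /natr_inj.
move=> i; apply/rootP/(poly_eq0_of_inj_roots natr_inj) => j; exact/rootP/P_eq0.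
Qed.

Lemma chebT_double_add_factor (F : numClosedFieldType) n (lc : F) rs :
  chebT F n = lc *: \prod_(z <- rs) ('X - z%:P) ->
  polyx (chebT F (2 * n)) + polyy (chebT F (2 * n)) =
  ((2%:R * lc ^+ 2)%:P)%:P * \prod_(z <- rs) chebyshev_conic z.
Proof.
move=> chebT_split; have two_neq0 : (2%:R : F) != 0 by rewrite pnatr_eq0.
have horner_chebT w : (chebT F n).[w] = lc * \prod_(z <- rs) (w - z).
  by rewrite chebT_split hornerZ horner_prod; under eq_bigr do rewrite hornerXsubC.
apply/eqP; rewrite -subr_eq0; apply/eqP/bivariate_poly_eq0 => x y.
have [u u_neq0 ->] := joukowski_surj x two_neq0.
have [v v_neq0 ->] := joukowski_surj y two_neq0.
rewrite hornerD hornerN hornerM !horner_prod hornerD hornerN hornerM horner_prod.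
under eq_bigr do rewrite chebyshev_conic_joukowski //.
rewrite hornerD /polyx /polyy hornerC horner_map !hornerC /= hornerD hornerC.
rewrite chebT_double_add_joukowski // !horner_chebT big_split /=.
by apply/eqP; rewrite subr_eq0; apply/eqP; ring.
Qed.

Theorem mainTheorem7 (R : realType) (n : nat) : (1 <= n)%N ->
  exists fs : seq {poly {poly R[i]}},
    [/\ size fs = n,
        (forall f, f \in fs -> irreducible_elt f /\ is_nonconstant2 f) &
        polyx (chebT R[i] (2 * n)) + polyy (chebT R[i] (2 * n)) = \prod_(f <- fs) f].
Proof.
move=> n_gt0; have two_neq0 : (2%:R : R[i]) != 0 by rewrite pnatr_eq0.
have [rs chebT_split] := closed_field_poly_normal (chebT R[i] n).
set lc := lead_coef _ in chebT_split.
have lc_neq0 : lc != 0 by rewrite lead_coef_eq0 chebT_neq0.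
have size_rs : size rs = n.
  have := size_chebT two_neq0 n.
  by rewrite chebT_split size_scale // size_prod_XsubC => -[].
have rs_sqr_neq1 z : z \in rs -> z ^+ 2 != 1.
  move=> z_rs; apply: (chebT_root_sqr_neq1 two_neq0 (k := n)).
  by rewrite chebT_split rootZ // root_prod_XsubC.
case: rs => [|r0 rs'] in chebT_split size_rs rs_sqr_neq1 *.
  by rewrite -size_rs in n_gt0.
exists ((2%:R * lc ^+ 2)%:P%:P * chebyshev_conic r0 :: map (@chebyshev_conic _) rs').
split.
- by rewrite /= size_map.
- move=> f; rewrite inE => /predU1P[->|/mapP[z z_rs ->]].
    apply: irreducible_scaled_chebyshev_conic; rewrite ?mulf_neq0 ?expf_neq0 //.
    by rewrite rs_sqr_neq1 ?mem_head.
  have := irreducible_scaled_chebyshev_conic two_neq0 (oner_neq0 _)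
    (rs_sqr_neq1 z (@mem_behead _ (r0 :: rs') z z_rs)).
  by rewrite !polyC1 mul1r.
- by rewrite (chebT_double_add_factor chebT_split) !big_cons big_map mulrA.
Qed.
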